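(* For all real $a>0$, $b>0$ and every complex $s$ with $\Re(s)>1$, \[\sum_{k=0}^\infty (-1)^k \zeta(s,ka+b)=(2a)^{-s} \sum_{n=0}^\infty \Big\{\zeta\Big(s,\frac{n+b}{2a}\Big)-\zeta\Big(s,\frac{n+b}{2a}+\frac{1}{2}\Big)\Big\}.\]
   Context: $\zeta(s,\alpha)=\sum_{n=0}^\infty (n+\alpha)^{-s}$ denotes the Hurwitz zeta function ($\Re(s)>1$, $\alpha>0$). *)

From Stdlib Require Import Reals.
From Coquelicot Require Import Coquelicot.
Open Scope R_scope.

(* x^w for real x > 0 and complex w, principal branch: exp(w * ln x). *)
Definition cpow_pos (x : R) (w : C) : C :=
  (exp (Re w * ln x) * cos (Im w * ln x), exp (Re w * ln x) * sin (Im w * ln x)).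

Definition hurwitz_term (s : C) (alpha : R) (n : nat) : C :=
  cpow_pos (INR n + alpha) (Copp s).

(* Hurwitz zeta zeta(s, alpha) = sum_{n>=0} (n+alpha)^(-s), computed as the
   sum of the real parts and of the imaginary parts (the series converges
   absolutely for Re s > 1, alpha > 0). *)
Definition hurwitz_zeta (s : C) (alpha : R) : C :=
  (Series (fun n => Re (hurwitz_term s alpha n)),
   Series (fun n => Im (hurwitz_term s alpha n))).

(* Pair consecutive terms of the alternating sum and expand both
   zeta values as Hurwitz series; this gives the double sequence
     g(j, n) = (n + 2j a + b)^(-s) - (n + (2j+1) a + b)^(-s).
   Its row sums (over n) are zeta(s, 2j a + b) - zeta(s, (2j+1) a + b); writing
   n + 2j a + b = 2a (j + (n+b)/(2a)), its column sums (over j) are (2a)^(-s)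
   times the bracket of the right-hand side.  A mean-value bound
   |x^(-s) - (x+a)^(-s)| <= C a x^(-Re s - 1) dominates |g(j, n)| by a product
   u(n) v(j) of two summable sequences, so rows and columns have the same
   total (double_series_swap).  Finally, since zeta(s, k a + b) -> 0, the
   paired series has the same sum as the alternating one (is_series_unpair). *)

From Stdlib Require Import Reals Lra Lia Psatz.
From Coquelicot Require Import Coquelicot.
Open Scope R_scope.

Lemma one_plus_le_exp (x : R) : 1 + x <= exp x.
Proof.
  destruct (Req_dec x 0) as [-> | Hx]; [rewrite exp_0; lra |].
  left; now apply exp_ineq1.
Qed.

Lemma ln_le_pred (r : R) : 0 < r -> ln r <= r - 1.
Proof.
  intros Hr. rewrite <- (ln_exp (r - 1)).
  apply ln_le; [exact Hr |]. pose proof (one_plus_le_exp (r - 1)); lra.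
Qed.

Lemma Rpower_pos (x p : R) : 0 < Rpower x p.
Proof. apply exp_pos. Qed.

Lemma Rpower_opp_antitone (x y p : R) :
  0 < y -> y <= x -> 0 <= p -> Rpower x (- p) <= Rpower y (- p).
Proof.
  intros Hy Hyx Hp. unfold Rpower.
  destruct (Rle_lt_or_eq_dec _ _ Hyx) as [Hlt | ->]; [| lra].
  destruct (Req_dec p 0) as [-> | Hp0]; [right; f_equal; ring |].
  assert (ln y < ln x) by (apply ln_increasing; lra).
  left; apply exp_increasing; nra.
Qed.

(* Splitting a decay exponent between two smaller bases: this is how a
   double sequence is dominated by a product of two summable sequences. *)
Lemma Rpower_opp_split (x y1 y2 p q : R) :
  0 < y1 -> 0 < y2 -> y1 <= x -> y2 <= x -> 0 <= p -> 0 <= q ->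
  Rpower x (- (p + q)) <= Rpower y1 (- p) * Rpower y2 (- q).
Proof.
  intros. replace (- (p + q)) with (- p + - q) by ring. rewrite Rpower_plus.
  apply Rmult_le_compat; try (left; apply Rpower_pos); apply Rpower_opp_antitone; auto.
Qed.

(* Discrete version of the integral of t^(-q):
   (q-1) (y+1)^(-q) <= y^(1-q) - (y+1)^(1-q). *)
Lemma Rpower_telescoping (y q : R) : 0 < y -> 1 < q ->
  (q - 1) * Rpower (y + 1) (- q) <= Rpower y (1 - q) - Rpower (y + 1) (1 - q).
Proof.
  intros Hy Hq.
  set (r := y / (y + 1)).
  assert (Hr : 0 < r) by (apply Rdiv_lt_0_compat; lra).
  assert (Hr' : 1 - r = / (y + 1)) by (unfold r; field; lra).
  assert (Ey : Rpower y (1 - q) = Rpower r (1 - q) * Rpower (y + 1) (1 - q)).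
  { assert (Hyr : y = r * (y + 1)) by (unfold r; field; lra).
    rewrite Hyr at 1. symmetry; apply Rpower_mult_distr; lra. }
  assert (Ey1 : Rpower (y + 1) (- q) = / (y + 1) * Rpower (y + 1) (1 - q)).
  { replace (1 - q) with (1 + - q) by ring.
    rewrite Rpower_plus, Rpower_1 by lra. field; lra. }
  assert (Hconv : 1 + (q - 1) * (1 - r) <= Rpower r (1 - q)).
  { eapply Rle_trans; [| apply one_plus_le_exp].
    pose proof (ln_le_pred r Hr). nra. }
  rewrite Ey, Ey1, <- Hr'.
  pose proof (Rpower_pos (y + 1) (1 - q)). nra.
Qed.

Lemma Rpower_opp_vanishes (q e : R) : 0 < q -> 0 < e ->
  exists X, forall x, X < x -> Rpower x (- q) < e.
Proof.
  intros Hq He. exists (exp (- ln e / q)). intros x Hx.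
  assert (Hl : - ln e / q < ln x).
  { rewrite <- (ln_exp (- ln e / q)). apply ln_increasing; [apply exp_pos | exact Hx]. }
  unfold Rpower. rewrite <- (exp_ln e) by lra. apply exp_increasing.
  apply (Rmult_lt_compat_l q) in Hl; [| exact Hq].
  replace (q * (- ln e / q)) with (- ln e) in Hl by (field; lra). lra.
Qed.

Lemma lim_norm {K : AbsRing} {V : NormedModule K} (f : nat -> V) (l : V) :
  filterlim f eventually (locally l) <->
  forall eps, 0 < eps -> exists N, forall n, (N <= n)%nat -> norm (minus (f n) l) < eps.
Proof.
  rewrite filterlim_locally_ball_norm. split.
  - intros H eps Heps. exact (H (mkposreal eps Heps)).
  - intros H eps. exact (H eps (cond_pos eps)).
Qed.

Lemma lim_C (f : nat -> C) (l : C) :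
  filterlim f eventually (locally l) <->
  forall eps, 0 < eps -> exists N, forall n, (N <= n)%nat -> Cmod (f n - l) < eps.
Proof. exact (lim_norm (K := C_AbsRing) (V := C_NormedModule) f l). Qed.

Lemma lim_R (f : nat -> R) (l : R) :
  filterlim f eventually (locally l) <->
  forall eps, 0 < eps -> exists N, forall n, (N <= n)%nat -> Rabs (f n - l) < eps.
Proof. exact (lim_norm (K := R_AbsRing) (V := R_NormedModule) f l). Qed.

Lemma lim_C_dist_le (f : nat -> C) (l y : C) (r : R) :
  filterlim f eventually (locally l) ->
  (exists N, forall n, (N <= n)%nat -> Cmod (f n - y) <= r) -> Cmod (l - y) <= r.
Proof.
  intros Hf [N HN]. destruct (Rle_or_lt (Cmod (l - y)) r) as [| Hlt]; [assumption |].
  destruct (proj1 (lim_C f l) Hf (Cmod (l - y) - r)) as [N' HN']; [lra |].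
  specialize (HN (N + N')%nat ltac:(lia)). specialize (HN' (N + N')%nat ltac:(lia)).
  pose proof (Cmod_triangle (- (f (N + N')%nat - l)) (f (N + N')%nat - y)) as Htri.
  rewrite Cmod_opp in Htri.
  replace (- (f (N + N')%nat - l) + (f (N + N')%nat - y))%C with (l - y)%C in Htri by ring.
  lra.
Qed.

Lemma sum_n_succ_C (u : nat -> C) (n : nat) : sum_n u (S n) = (sum_n u n + u (S n))%C.
Proof. rewrite sum_Sn; reflexivity. Qed.

Lemma sum_n_succ_R (u : nat -> R) (n : nat) : sum_n u (S n) = sum_n u n + u (S n).
Proof. rewrite sum_Sn; reflexivity. Qed.

Lemma partial_sum_le_series (u : nat -> R) (U : R) (n : nat) :
  (forall k, 0 <= u k) -> is_series u U -> sum_n u n <= U.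
Proof.
  intros Hu HU. apply (is_lim_seq_incr_compare (sum_n u)); [exact HU |].
  intros k. rewrite sum_n_succ_R. specialize (Hu (S k)). lra.
Qed.

Lemma series_remainder_small (u : nat -> R) (U : R) : is_series u U ->
  forall eps, 0 < eps -> exists N0, forall N, (N0 <= N)%nat -> U - sum_n u N < eps.
Proof.
  intros HU eps Heps. destruct (proj1 (lim_R _ _) HU eps Heps) as [N0 HN0].
  exists N0. intros N HN. eapply Rle_lt_trans; [| exact (HN0 N HN)].
  rewrite Rabs_minus_sym. apply Rle_abs.
Qed.

Lemma series_nonneg (u : nat -> R) (U : R) :
  (forall k, 0 <= u k) -> is_series u U -> 0 <= U.
Proof.
  intros Hu HU. eapply Rle_trans; [| exact (partial_sum_le_series u U 0 Hu HU)].
  rewrite sum_O. apply Hu.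
Qed.

Lemma series_norm_le (w : nat -> C) (l : C) (r : nat -> R) (S : R) :
  is_series w l -> is_series r S -> (forall n, Cmod (w n) <= r n) -> Cmod l <= S.
Proof.
  intros Hw Hr Hb.
  assert (Hr0 : forall k, 0 <= r k) by (intros k; eapply Rle_trans; [apply Cmod_ge_0 | apply Hb]).
  replace l with (l - 0)%C by ring. apply lim_C_dist_le with (sum_n w); [exact Hw |].
  assert (Hsub0 : forall z : C, (z - 0)%C = z) by (intros; ring).
  exists 0%nat. intros n _. rewrite Hsub0.
  eapply Rle_trans; [apply (norm_sum_n_m (K := C_AbsRing) (V := C_NormedModule) w 0 n) |].
  eapply Rle_trans; [apply sum_n_m_le; intros k; apply Hb |].
  now apply partial_sum_le_series.
Qed.

Lemma small_times_nonneg (x V eps : R) :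
  0 <= x -> x < eps / (V + 1) -> 0 <= V -> 0 < eps -> x * V < eps.
Proof.
  intros Hx0 Hx HV He.
  assert (x * V <= eps / (V + 1) * V) by (apply Rmult_le_compat_r; lra).
  assert (eps / (V + 1) * V < eps).
  { apply Rmult_lt_reg_r with (V + 1); [lra |]. field_simplify; nra. }
  lra.
Qed.

Lemma is_series_mult_r (u : nat -> R) (U c : R) :
  is_series u U -> is_series (fun n => u n * c) (U * c).
Proof.
  intros H. apply is_series_ext with (fun n => @scal R_AbsRing R_NormedModule c (u n)).
  - intros n. unfold scal; simpl; unfold mult; simpl. ring.
  - replace (U * c) with (@scal R_AbsRing R_NormedModule c U).
    + now apply is_series_scal.
    + unfold scal; simpl; unfold mult; simpl. ring.
Qed.

Lemma is_series_mult_l (u : nat -> R) (U c : R) :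
  is_series u U -> is_series (fun n => c * u n) (c * U).
Proof.
  intros H. rewrite Rmult_comm. apply (is_series_ext (fun n => u n * c)).
  - intros n; apply Rmult_comm.
  - exact (is_series_mult_r u U c H).
Qed.

(* The p-series sum_n (n + c)^(-q) converges for q > 1: its partial sums
   stay below c^(-q) + c^(1-q)/(q-1) by Rpower_telescoping. *)
Lemma ex_series_Rpower (c q : R) : 0 < c -> 1 < q ->
  ex_series (fun n => Rpower (INR n + c) (- q)).
Proof.
  intros Hc Hq.
  set (u := fun n => Rpower (INR n + c) (- q)).
  set (M := Rpower c (- q) + Rpower c (1 - q) / (q - 1)).
  assert (Htele : forall N, sum_n u N <= M - Rpower (INR N + c) (1 - q) / (q - 1)).
  { induction N as [| N IH].
    - rewrite sum_O. unfold u, M. simpl. rewrite Rplus_0_l. lra.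
    - rewrite sum_n_succ_R. unfold u at 2. rewrite S_INR.
      replace (INR N + 1 + c) with (INR N + c + 1) by ring.
      assert (HN : 0 < INR N + c) by (pose proof (pos_INR N); lra).
      pose proof (Rpower_telescoping (INR N + c) q HN Hq) as T.
      assert (Rpower (INR N + c + 1) (- q) <=
        (Rpower (INR N + c) (1 - q) - Rpower (INR N + c + 1) (1 - q)) / (q - 1)).
      { apply Rmult_le_reg_l with (q - 1); [lra |]. field_simplify; lra. }
      unfold Rdiv in *. lra. }
  assert (Hincr : forall n, sum_n u n <= sum_n u (S n)).
  { intros n. rewrite sum_n_succ_R. pose proof (Rpower_pos (INR (S n) + c) (- q)).
    unfold u; lra. }
  assert (Hbound : forall n, sum_n u n <= M).
  { intros n. pose proof (Htele n).
    assert (0 < Rpower (INR n + c) (1 - q) / (q - 1))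
      by (apply Rdiv_lt_0_compat; [apply Rpower_pos | lra]).
    lra. }
  destruct (ex_finite_lim_seq_incr _ M Hincr Hbound) as [l Hl].
  now exists l.
Qed.

Lemma ex_series_Rpower_affine (d c q : R) : 0 < d -> 0 < c -> 1 < q ->
  ex_series (fun n => Rpower (INR n * d + c) (- q)).
Proof.
  intros Hd Hc Hq.
  assert (Hcd : 0 < c / d) by (apply Rdiv_lt_0_compat; assumption).
  destruct (ex_series_Rpower (c / d) q Hcd Hq) as [l Hl].
  exists (Rpower d (- q) * l).
  apply is_series_ext with (fun n => Rpower d (- q) * Rpower (INR n + c / d) (- q)).
  - intros n. pose proof (pos_INR n).
    rewrite Rpower_mult_distr by lra. f_equal. field. lra.
  - now apply is_series_mult_l.
Qed.

Lemma sum_n_Re (u : nat -> C) (n : nat) : Re (sum_n u n) = sum_n (fun k => Re (u k)) n.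
Proof.
  induction n as [| n IH]; [now rewrite !sum_O |].
  rewrite sum_n_succ_C, sum_n_succ_R, <- IH. reflexivity.
Qed.

Lemma sum_n_Im (u : nat -> C) (n : nat) : Im (sum_n u n) = sum_n (fun k => Im (u k)) n.
Proof.
  induction n as [| n IH]; [now rewrite !sum_O |].
  rewrite sum_n_succ_C, sum_n_succ_R, <- IH. reflexivity.
Qed.

Lemma is_series_Re_Im (u : nat -> C) (l : C) : is_series u l ->
  is_series (fun k => Re (u k)) (Re l) /\ is_series (fun k => Im (u k)) (Im l).
Proof.
  intros H. split; apply lim_R; intros eps Heps;
    destruct (proj1 (lim_C _ _) H eps Heps) as [N HN]; exists N; intros n Hn;
    (eapply Rle_lt_trans; [| exact (HN n Hn)]).
  - rewrite <- sum_n_Re.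
    replace (Re (sum_n u n) - Re l) with (Re (sum_n u n - l))
      by (destruct (sum_n u n), l; simpl; ring).
    apply re_le_Cmod.
  - rewrite <- sum_n_Im.
    replace (Im (sum_n u n) - Im l) with (Im (sum_n u n - l))
      by (destruct (sum_n u n), l; simpl; ring).
    eapply Rle_trans; [apply Rmax_r | apply Rmax_Cmod].
Qed.

Lemma sum_n_pairs (c : nat -> C) (J : nat) :
  sum_n c (S (2 * J)) = sum_n (fun j => (c (2 * j)%nat + c (S (2 * j)))%C) J.
Proof.
  induction J as [| J IH].
  - simpl. rewrite sum_n_succ_C, !sum_O. reflexivity.
  - replace (2 * S J)%nat with (S (S (2 * J))) by lia.
    rewrite sum_n_succ_C, sum_n_succ_C, IH, sum_n_succ_C.
    replace (2 * S J)%nat with (S (S (2 * J))) by lia. symmetry; apply Cplus_assoc.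
Qed.

Lemma is_series_unpair (c : nat -> C) (L : C) :
  is_series (fun j => (c (2 * j)%nat + c (S (2 * j)))%C) L ->
  (forall eps, 0 < eps -> exists N, forall n, (N <= n)%nat -> Cmod (c n) < eps) ->
  is_series c L.
Proof.
  intros HL Hc. apply lim_C. intros eps Heps.
  destruct (proj1 (lim_C _ _) HL (eps / 2)) as [N1 HN1]; [lra |].
  destruct (Hc (eps / 2)) as [N2 HN2]; [lra |].
  exists (S (2 * (N1 + N2))). intros n Hn.
  destruct (Nat.Even_or_Odd n) as [[J ->] | [J ->]].
  - destruct J as [| J]; [lia |].
    replace (2 * S J)%nat with (S (S (2 * J))) by lia.
    rewrite sum_n_succ_C, sum_n_pairs.
    specialize (HN1 J ltac:(lia)). specialize (HN2 (S (S (2 * J))) ltac:(lia)).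
    assert (Hsplit : forall x y : C, (x + y - L = (x - L) + y)%C) by (intros; ring).
    rewrite Hsplit. eapply Rle_lt_trans; [apply Cmod_triangle |].
    replace eps with (eps / 2 + eps / 2) by field.
    apply Rplus_lt_compat; [exact HN1 | exact HN2].
  - replace (2 * J + 1)%nat with (S (2 * J)) by lia. rewrite sum_n_pairs.
    eapply Rlt_trans; [exact (HN1 J ltac:(lia)) | lra].
Qed.

Section DoubleSeries.

Variables (g : nat -> nat -> C) (u v : nat -> R) (U V : R).
Hypotheses (Hu : forall n, 0 <= u n) (Hv : forall j, 0 <= v j).
Hypotheses (HU : is_series u U) (HV : is_series v V).
Hypothesis Hg : forall j n, Cmod (g j n) <= u n * v j.

Lemma is_series_column_sums (B : nat -> C) :
  (forall n, is_series (fun j => g j n) (B n)) ->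
  forall N, is_series (fun j => sum_n (g j) N) (sum_n B N).
Proof.
  intros HB N. induction N as [| N IH].
  - apply is_series_ext with (fun j => g j 0%nat); [intros; now rewrite sum_O |].
    rewrite sum_O. apply HB.
  - apply is_series_ext with (fun j => plus (sum_n (g j) N) (g j (S N))).
    + intros j. now rewrite sum_Sn.
    + rewrite sum_Sn. exact (is_series_plus _ _ _ _ IH (HB (S N))).
Qed.

Lemma row_tail_le (A : nat -> C) (j N : nat) : is_series (g j) (A j) ->
  Cmod (A j - sum_n (g j) N) <= (U - sum_n u N) * v j.
Proof.
  intros HA. apply lim_C_dist_le with (sum_n (g j)); [exact HA |].
  exists N. intros M HM.
  assert (Hpartial : Cmod (sum_n (g j) M - sum_n (g j) N) <= (sum_n u M - sum_n u N) * v j).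
  { induction HM as [| M HM IH].
    - replace (sum_n (g j) N - sum_n (g j) N)%C with (RtoC 0) by ring.
      rewrite Cmod_0. lra.
    - rewrite sum_n_succ_C, sum_n_succ_R.
      replace (sum_n (g j) M + g j (S M) - sum_n (g j) N)%C
        with ((sum_n (g j) M - sum_n (g j) N) + g j (S M))%C by ring.
      eapply Rle_trans; [apply Cmod_triangle |].
      specialize (Hg j (S M)). lra. }
  eapply Rle_trans; [exact Hpartial |]. apply Rmult_le_compat_r; [apply Hv |].
  pose proof (partial_sum_le_series u U M Hu HU). lra.
Qed.

Lemma double_series_swap (A B : nat -> C) :
  (forall j, is_series (g j) (A j)) -> (forall n, is_series (fun j => g j n) (B n)) ->
  exists T, is_series A T /\ is_series B T.
Proof.
  intros HA HB.
  assert (HAv : forall j, Cmod (A j) <= U * v j).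
  { intros j. apply series_norm_le with (g j) (fun n => u n * v j); [apply HA | |].
    - now apply is_series_mult_r.
    - intros n. apply Hg. }
  assert (HexA : ex_series A).
  { apply (ex_series_le (V := C_CompleteNormedModule)) with (fun j => U * v j).
    - intros j; apply HAv.
    - exists (U * V). now apply is_series_mult_l. }
  destruct HexA as [T HT]. exists T. split; [exact HT |].
  assert (Hrest : forall N, Cmod (T - sum_n B N) <= (U - sum_n u N) * V).
  { intros N.
    apply series_norm_le with (fun j => A j - sum_n (g j) N)%C
      (fun j => (U - sum_n u N) * v j).
    - exact (is_series_minus _ _ _ _ HT (is_series_column_sums B HB N)).
    - now apply is_series_mult_l.
    - intros j. apply row_tail_le, HA. }
  assert (HV0 : 0 <= V) by (apply series_nonneg with v; assumption).
  apply lim_C. intros eps Heps.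
  destruct (series_remainder_small u U HU (eps / (V + 1))) as [N0 HN0];
    [apply Rdiv_lt_0_compat; lra |].
  exists N0. intros N HN.
  specialize (HN0 N HN). pose proof (partial_sum_le_series u U N Hu HU).
  assert (Hopp : forall x y : C, (x - y = - (y - x))%C) by (intros; ring).
  rewrite Hopp, Cmod_opp. eapply Rle_lt_trans; [apply Hrest |].
  apply small_times_nonneg; lra.
Qed.

End DoubleSeries.

Lemma Rabs_sin_le (u : R) : Rabs (sin u) <= Rabs u.
Proof.
  assert (Hpos : forall t, 0 <= t -> Rabs (sin t) <= t).
  { intros t Ht. destruct (Req_dec t 0) as [-> | Ht0]; [rewrite sin_0, Rabs_R0; lra |].
    assert (sin t < t) by (apply sin_lt_x; lra).
    assert (- t <= sin t).
    { destruct (Rle_or_lt 1 t); [pose proof (SIN_bound t); lra |].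
      assert (0 < sin t) by (apply sin_pos_tech; lra). lra. }
    apply Rabs_le; lra. }
  destruct (Rle_or_lt 0 u).
  - rewrite (Rabs_right u) by lra. now apply Hpos.
  - replace (sin u) with (- sin (- u)) by (rewrite sin_neg; ring).
    rewrite Rabs_Ropp, (Rabs_left u) by lra. apply Hpos; lra.
Qed.

Lemma one_minus_cos_bound (u : R) : 0 <= 1 - cos u <= Rabs u.
Proof.
  replace u with (2 * (u / 2)) by field. rewrite cos_2a_sin, Rabs_mult, (Rabs_right 2) by lra.
  pose proof (Rabs_sin_le (u / 2)). pose proof (SIN_bound (u / 2)).
  assert (sin (u / 2) * sin (u / 2) <= Rabs (sin (u / 2))).
  { destruct (Rle_or_lt 0 (sin (u / 2))); [rewrite Rabs_right | rewrite Rabs_left]; nra. }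
  split; nra.
Qed.

Lemma Cmod_le_Rabs_sum (z : C) : Cmod z <= Rabs (Re z) + Rabs (Im z).
Proof.
  destruct z as [p q]. unfold Cmod, Re, Im; simpl.
  pose proof (Rabs_pos p). pose proof (Rabs_pos q).
  rewrite <- (sqrt_pow2 (Rabs p + Rabs q)) by lra. apply sqrt_le_1_alt.
  pose proof (pow2_abs p). pose proof (pow2_abs q). nra.
Qed.

Lemma cpow_pos_norm (x : R) (w : C) : 0 < x -> Cmod (cpow_pos x w) = Rpower x (Re w).
Proof.
  intros Hx. unfold cpow_pos, Cmod, Rpower. cbn [fst snd].
  set (e := exp (Re w * ln x)). set (t := Im w * ln x).
  replace ((e * cos t) ^ 2 + (e * sin t) ^ 2) with (e ^ 2).
  - apply sqrt_pow2. left; apply exp_pos.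
  - pose proof (sin2_cos2 t). unfold Rsqr in *. nra.
Qed.

Lemma cpow_pos_mult (x y : R) (w : C) : 0 < x -> 0 < y ->
  (cpow_pos x w * cpow_pos y w)%C = cpow_pos (x * y) w.
Proof.
  intros Hx Hy. unfold cpow_pos. rewrite ln_mult by assumption.
  rewrite !Rmult_plus_distr_l, exp_plus, cos_plus, sin_plus.
  apply injective_projections; simpl; ring.
Qed.

Lemma cpow_pos_opp_inv (x : R) (w : C) : 0 < x -> (cpow_pos x w * cpow_pos x (- w))%C = 1%C.
Proof.
  intros Hx. destruct w as [p q]. unfold cpow_pos, Re, Im; simpl.
  replace (- p * ln x) with (- (p * ln x)) by ring.
  replace (- q * ln x) with (- (q * ln x)) by ring.
  rewrite cos_neg, sin_neg, exp_Ropp.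
  pose proof (exp_pos (p * ln x)). pose proof (sin2_cos2 (q * ln x)) as Hsc. unfold Rsqr in Hsc.
  apply injective_projections; simpl; field_simplify; lra.
Qed.

(* For y >= 1: |1 - y^(-s)| <= (Re s + 2 |Im s|) ln y, splitting 1 - y^(-s)
   into the modulus defect 1 - y^(-Re s) and the rotation by Im s ln y. *)
Lemma one_minus_cpow_bound (y : R) (s : C) : 1 <= y -> 0 < Re s ->
  Cmod (1 - cpow_pos y (- s))%C <= (Re s + 2 * Rabs (Im s)) * ln y.
Proof.
  intros Hy Hs. destruct s as [p q]. unfold Re, Im in *; simpl in *.
  set (t := ln y).
  assert (Ht : 0 <= t) by (unfold t; rewrite <- ln_1; apply ln_le; lra).
  eapply Rle_trans; [apply Cmod_le_Rabs_sum |]. unfold cpow_pos, Re, Im; simpl. fold t.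
  set (E := exp (- p * t)). set (ph := - q * t).
  assert (HE0 : 0 < E) by apply exp_pos.
  assert (HE1 : 1 - E <= p * t) by (pose proof (one_plus_le_exp (- p * t)); unfold E; lra).
  assert (HE2 : E <= 1).
  { unfold E. rewrite <- exp_0. destruct (Req_dec t 0) as [-> | Ht0].
    - right; f_equal; ring.
    - left; apply exp_increasing; nra. }
  pose proof (one_minus_cos_bound ph). pose proof (Rabs_sin_le ph).
  assert (Hph : Rabs ph = Rabs q * t).
  { unfold ph. rewrite Rabs_mult, Rabs_Ropp, (Rabs_right t) by lra. reflexivity. }
  replace (1 + - (E * cos ph)) with ((1 - E) + E * (1 - cos ph)) by ring.
  replace (0 + - (E * sin ph)) with (- (E * sin ph)) by ring.
  rewrite (Rabs_right ((1 - E) + E * (1 - cos ph))) by nra.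
  rewrite Rabs_Ropp, Rabs_mult, (Rabs_right E) by lra.
  pose proof (Rabs_pos (sin ph)). nra.
Qed.

Lemma cpow_pos_increment_bound (x h : R) (s : C) : 0 < x -> 0 <= h -> 0 < Re s ->
  Cmod (cpow_pos x (- s) - cpow_pos (x + h) (- s))%C
    <= (Re s + 2 * Rabs (Im s)) * h * Rpower x (- Re s - 1).
Proof.
  intros Hx Hh Hs.
  set (K := Re s + 2 * Rabs (Im s)). set (y := 1 + h / x).
  assert (Hhx : 0 <= h / x) by (apply Rdiv_le_0_compat; lra).
  assert (Hy : 1 <= y) by (unfold y; lra).
  assert (HK : 0 <= K) by (unfold K; pose proof (Rabs_pos (Im s)); lra).
  replace (x + h) with (x * y) by (unfold y; field; lra).
  rewrite <- cpow_pos_mult by lra.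
  replace (cpow_pos x (- s) - cpow_pos x (- s) * cpow_pos y (- s))%C
    with (cpow_pos x (- s) * (1 - cpow_pos y (- s)))%C by ring.
  rewrite Cmod_mult, cpow_pos_norm by lra.
  assert (Hln : ln y <= h / x).
  { rewrite <- (ln_exp (h / x)). apply ln_le; [lra |].
    pose proof (one_plus_le_exp (h / x)); unfold y; lra. }
  assert (Hpow : Rpower x (- Re s - 1) = Rpower x (Re (- s)) / x).
  { replace (- Re s - 1) with (Re (- s) + - (1)) by (unfold Re; simpl; ring).
    rewrite Rpower_plus, Rpower_Ropp, Rpower_1 by lra. reflexivity. }
  rewrite Hpow. pose proof (Rpower_pos x (Re (- s))).
  apply Rle_trans with (Rpower x (Re (- s)) * (K * (h / x))).
  - apply Rmult_le_compat_l; [lra |].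
    eapply Rle_trans; [apply one_minus_cpow_bound; assumption |].
    apply Rmult_le_compat_l; assumption.
  - right. field. lra.
Qed.

Lemma hurwitz_zeta_is_series (s : C) (al : R) : 0 < al -> 1 < Re s ->
  is_series (hurwitz_term s al) (hurwitz_zeta s al).
Proof.
  intros Hal Hs.
  assert (Hex : ex_series (hurwitz_term s al)).
  { apply (ex_series_le (V := C_CompleteNormedModule))
      with (fun n => Rpower (INR n + al) (- Re s)).
    - intros n. change (Cmod (hurwitz_term s al n) <= Rpower (INR n + al) (- Re s)).
      unfold hurwitz_term. rewrite cpow_pos_norm by (pose proof (pos_INR n); lra).
      right; reflexivity.
    - now apply ex_series_Rpower. }
  destruct Hex as [l Hl]. destruct (is_series_Re_Im _ _ Hl) as [HRe HIm].
  unfold hurwitz_zeta. rewrite (is_series_unique _ _ HRe), (is_series_unique _ _ HIm).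
  destruct l; exact Hl.
Qed.

Lemma hurwitz_zeta_decay (s : C) (b al p d U : R) :
  0 < b -> b <= al -> 1 < Re s -> 0 <= p -> 0 <= d -> Re s = p + d ->
  is_series (fun n => Rpower (INR n + b) (- p)) U ->
  Cmod (hurwitz_zeta s al) <= U * Rpower al (- d).
Proof.
  intros Hb Hbal Hs Hp Hd Hpd HU.
  apply series_norm_le with (hurwitz_term s al)
    (fun n => Rpower (INR n + b) (- p) * Rpower al (- d)).
  - apply hurwitz_zeta_is_series; lra.
  - now apply is_series_mult_r.
  - intros n. pose proof (pos_INR n). unfold hurwitz_term.
    rewrite cpow_pos_norm by lra.
    replace (Re (- s)%C) with (- (p + d)) by (unfold Re in *; simpl; lra).
    apply Rpower_opp_split; lra.
Qed.

Lemma hurwitz_zeta_vanishes (s : C) (a b : R) : 0 < a -> 0 < b -> 1 < Re s ->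
  forall eps, 0 < eps ->
  exists N, forall m, (N <= m)%nat -> Cmod (hurwitz_zeta s (INR m * a + b)) < eps.
Proof.
  intros Ha Hb Hs eps Heps.
  set (d := (Re s - 1) / 2).
  assert (Hd : 0 < d) by (unfold d; lra).
  destruct (ex_series_Rpower b (1 + d)) as [U HU]; [assumption | lra |].
  assert (HU0 : 0 <= U) by (apply series_nonneg with (2 := HU); intros; left; apply Rpower_pos).
  destruct (Rpower_opp_vanishes d (eps / (U + 1))) as [X HX];
    [assumption | apply Rdiv_lt_0_compat; lra |].
  destruct (INR_unbounded (X / a)) as [N HN]. exists N. intros m Hm.
  apply le_INR in Hm.
  assert (Hma : X < INR m * a + b).
  { apply Rle_lt_trans with (X / a * a); [right; field; lra |].
    assert (X / a * a < INR m * a) by (apply Rmult_lt_compat_r; lra). lra. }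
  eapply Rle_lt_trans.
  - apply hurwitz_zeta_decay with (b := b) (p := 1 + d) (d := d); try lra.
    + pose proof (pos_INR m). nra.
    + unfold d; lra.
    + exact HU.
  - rewrite Rmult_comm. apply small_times_nonneg; try lra.
    + left; apply Rpower_pos.
    + apply HX, Hma.
Qed.

(* The double sequence behind the theorem: row j pairs the consecutive terms
   k = 2j and k = 2j + 1 of the alternating sum, term by term in n. *)
Definition alternating_pair_term (a b : R) (s : C) (j n : nat) : C :=
  (hurwitz_term s (INR (2 * j) * a + b) n - hurwitz_term s (INR (S (2 * j)) * a + b) n)%C.

Section AlternatingPairs.

Variables (a b : R) (s : C).
Hypotheses (Ha : 0 < a) (Hb : 0 < b) (Hs : 1 < Re s).

Lemma shift_pos (m : nat) : 0 < INR m * a + b.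
Proof. pose proof (pos_INR m). nra. Qed.

Lemma alternating_pair_rows (j : nat) :
  is_series (alternating_pair_term a b s j)
    (hurwitz_zeta s (INR (2 * j) * a + b) - hurwitz_zeta s (INR (S (2 * j)) * a + b))%C.
Proof.
  apply (is_series_minus (K := C_AbsRing) (V := C_NormedModule));
    apply hurwitz_zeta_is_series; auto using shift_pos.
Qed.

(* Column sums: since n + 2j a + b = 2a (j + (n+b)/(2a)), column n is
   (2a)^(-s) times a difference of two Hurwitz series in j. *)
Lemma alternating_pair_columns (n : nat) :
  is_series (fun j => alternating_pair_term a b s j n)
    (cpow_pos (2 * a) (- s) *
      (hurwitz_zeta s ((INR n + b) / (2 * a)) -
       hurwitz_zeta s ((INR n + b) / (2 * a) + 1 / 2)))%C.
Proof.
  set (y := (INR n + b) / (2 * a)).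
  assert (Hy : 0 < y) by (apply Rdiv_lt_0_compat; pose proof (pos_INR n); lra).
  pose proof (is_series_minus (K := C_AbsRing) (V := C_NormedModule) _ _ _ _
    (hurwitz_zeta_is_series s y Hy Hs)
    (hurwitz_zeta_is_series s (y + 1 / 2) ltac:(lra) Hs)) as Hdiff.
  apply (is_series_ext _ _ _) with (2 := is_series_scal (cpow_pos (2 * a) (- s)) _ _ Hdiff).
  intros j. pose proof (pos_INR j).
  change (cpow_pos (2 * a) (- s) *
      (hurwitz_term s y j + - hurwitz_term s (y + 1 / 2) j) =
    alternating_pair_term a b s j n)%C.
  unfold alternating_pair_term, hurwitz_term.
  replace (INR n + (INR (2 * j) * a + b)) with (2 * a * (INR j + y))
    by (unfold y; rewrite mult_INR; simpl; field; lra).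
  replace (INR n + (INR (S (2 * j)) * a + b)) with (2 * a * (INR j + (y + 1 / 2)))
    by (unfold y; rewrite S_INR, mult_INR; simpl; field; lra).
  rewrite <- !cpow_pos_mult by lra. ring.
Qed.

(* Product domination: with d = (Re s - 1)/2,
   |term j n| <= K (n + b)^(-(1+d)) * (j (2a) + b)^(-(Re s - d)),
   both factors summable. *)
Lemma alternating_pair_dominated :
  exists (u v : nat -> R) (U V : R),
    (forall n, 0 <= u n) /\ (forall j, 0 <= v j) /\ is_series u U /\ is_series v V /\
    (forall j n, Cmod (alternating_pair_term a b s j n) <= u n * v j).
Proof.
  set (d := (Re s - 1) / 2).
  set (K := (Re s + 2 * Rabs (Im s)) * a).
  assert (HK : 0 <= K) by (unfold K; pose proof (Rabs_pos (Im s)); nra).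
  destruct (ex_series_Rpower b (1 + d)) as [U HU]; [assumption | unfold d; lra |].
  destruct (ex_series_Rpower_affine (2 * a) b (Re s - d)) as [V HV];
    [lra | assumption | unfold d; lra |].
  exists (fun n => K * Rpower (INR n + b) (- (1 + d))),
         (fun j => Rpower (INR j * (2 * a) + b) (- (Re s - d))), (K * U), V.
  split; [intros n; pose proof (Rpower_pos (INR n + b) (- (1 + d))); nra |].
  split; [intros j; left; apply Rpower_pos |].
  split; [now apply is_series_mult_l |]. split; [exact HV |].
  intros j n. unfold alternating_pair_term, hurwitz_term.
  pose proof (pos_INR n). pose proof (pos_INR j).
  assert (Hx : 0 < INR n + (INR (2 * j) * a + b)) by (pose proof (shift_pos (2 * j)); lra).
  replace (INR n + (INR (S (2 * j)) * a + b)) with (INR n + (INR (2 * j) * a + b) + a)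
    by (rewrite S_INR; ring).
  eapply Rle_trans; [apply cpow_pos_increment_bound; lra |].
  replace (- Re s - 1) with (- ((1 + d) + (Re s - d))) by ring.
  fold K. rewrite Rmult_assoc. apply Rmult_le_compat_l; [assumption |].
  rewrite mult_INR; simpl (INR 2).
  apply Rpower_opp_split; unfold d; nra.
Qed.

End AlternatingPairs.

Theorem mainTheorem13 (a b : R) (s : C) :
  0 < a -> 0 < b -> 1 < Re s ->
  exists L Rs : C,
    is_series (fun k : nat => Cmult (RtoC ((-1) ^ k)) (hurwitz_zeta s (INR k * a + b))) L /\
    is_series (fun n : nat =>
      Cminus (hurwitz_zeta s ((INR n + b) / (2 * a)))
             (hurwitz_zeta s ((INR n + b) / (2 * a) + 1 / 2))) Rs /\
    L = Cmult (cpow_pos (2 * a) (Copp s)) Rs.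
Proof.
  intros Ha Hb Hs.
  destruct (alternating_pair_dominated a b s Ha Hb Hs)
    as (u & v & U & V & Hu & Hv & HU & HV & Hdom).
  destruct (double_series_swap _ u v U V Hu Hv HU HV Hdom _ _
    (alternating_pair_rows a b s Ha Hb Hs) (alternating_pair_columns a b s Ha Hb Hs))
    as (T & Hrows & Hcols).
  set (c := cpow_pos (2 * a) s).
  assert (Hc : (c * cpow_pos (2 * a) (- s))%C = 1%C) by (apply cpow_pos_opp_inv; lra).
  exists T, (c * T)%C. split; [| split].
  (* Left side: the rows are the consecutive pairs (-1)^(2j) z_2j + (-1)^(2j+1) z_(2j+1),
     and the terms tend to 0. *)
  - apply is_series_unpair.
    + apply (is_series_ext _ _ _) with (2 := Hrows). intros j.
      rewrite pow_1_even, pow_1_odd. apply injective_projections; simpl; ring.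
    + intros eps Heps. destruct (hurwitz_zeta_vanishes s a b Ha Hb Hs eps Heps) as [N HN].
      exists N. intros m Hm. rewrite Cmod_mult, Cmod_R, pow_1_abs, Rmult_1_l. now apply HN.
  (* Right side: the columns are (2a)^(-s) times its terms; multiply by (2a)^s. *)
  - apply (is_series_ext _ _ _) with (2 := is_series_scal c _ _ Hcols). intros n.
    set (D := Cminus _ _). change (c * (cpow_pos (2 * a) (- s) * D) = D)%C.
    now rewrite Cmult_assoc, Hc, Cmult_1_l.
  - change (T = cpow_pos (2 * a) (- s) * (c * T))%C.
    now rewrite Cmult_assoc, (Cmult_comm _ c), Hc, Cmult_1_l.
Qed.
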